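(* Let $G=(V,E)$ be a finite simple graph of order $n$ with adjacency matrix $A$ having eigenvalues $\lambda_1\ge\cdots\ge\lambda_n$, let $k\ge1$, and let $p\in\mathbb{R}_k[x]$. Set $W(p):=\max_{u\in V}(p(A))_{uu}$ and $w(p):=\min_{u\in V}(p(A))_{uu}$. Then $$\chi_{kq}(G)\ \ge\ \frac{n}{\min\{\,|\{i : p(\lambda_i)\ge w(p)\}|,\ |\{i : p(\lambda_i)\le W(p)\}|\,\}}.$$
   Context: $\mathbb{R}_k[x]$ denotes the real polynomials of degree at most $k$. $\mathrm{dist}(v,w)$ is the graph distance in $G$, $[c]=\{1,\dots,c\}$. A quantum $k$-distance $c$-coloring of $G$ is a collection of orthogonal projectors $\{P_{v,h} : v\in V, h\in[c]\}$ in $\mathbb{C}^{d\times d}$ (for some $d\ge 1$) with $\sum_{h\in[c]}P_{v,h}=I_d$ for each $v\in V$ and $P_{v,h}P_{w,h}=0$ for all distinct $v,w$ with $\mathrm{dist}(v,w)\le k$ and all $h$. The quantum $k$-distance chromatic number $\chi_{kq}(G)$ is the smallest $c$ for which such a coloring exists for some $d>0$; equivalently it is the quantum chromatic number of the $k$-th power graph $G^k$ (same vertex set, distinct vertices adjacent iff at distance at most $k$ in $G$). *)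

From HB Require Import structures.
From mathcomp Require Import all_boot all_order all_algebra.
From mathcomp Require Import reals.
From mathcomp.real_closed Require Import complex.
Set Implicit Arguments. Unset Strict Implicit. Unset Printing Implicit Defensive.
Import Order.TTheory GRing.Theory Num.Theory.
Local Open Scope ring_scope.

Definition simple_graph (n : nat) (e : rel 'I_n) : Prop :=
  symmetric e /\ irreflexive e.

Definition dist_le (n : nat) (e : rel 'I_n) (k : nat) (v w : 'I_n) : Prop :=
  exists s : seq 'I_n, [/\ path e v s, last v s = w & (size s <= k)%N].

Definition adjmx (R : numDomainType) (n : nat) (e : rel 'I_n) : 'M[R]_n :=
  \matrix_(i, j) (e i j)%:R.

Definition adjointmx (R : rcfType) (d : nat) (M : 'M[R[i]]_d) : 'M[R[i]]_d :=
  (map_mx (@conjc R) M)^T.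

Definition orth_proj (R : rcfType) (d : nat) (P : 'M[R[i]]_d) : Prop :=
  P *m P = P /\ adjointmx P = P.

Definition quantum_kdist_coloring (R : rcfType) (n : nat) (e : rel 'I_n)
    (k c d : nat) (P : 'I_n -> 'I_c -> 'M[R[i]]_d) : Prop :=
  [/\ (forall v h, orth_proj (P v h)),
      (forall v, \sum_(h < c) P v h = 1%:M) &
      (forall v w h, v != w -> dist_le e k v w -> P v h *m P w h = 0)].

Definition has_quantum_kdist_coloring (R : rcfType) (n : nat) (e : rel 'I_n)
    (k c : nat) : Prop :=
  exists d : nat, (0 < d)%N /\
    exists P : 'I_n -> 'I_c -> 'M[R[i]]_d, @quantum_kdist_coloring R n e k c d P.

Definition maxdiag (R : realDomainType) (n : nat) (M : 'M[R]_n) (u0 : 'I_n) : R :=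
  \big[Num.max/M u0 u0]_(u < n) M u u.
Definition mindiag (R : realDomainType) (n : nat) (M : 'M[R]_n) (u0 : 'I_n) : R :=
  \big[Num.min/M u0 u0]_(u < n) M u u.

Definition poly_mx (R : comNzRingType) (n : nat) (p : {poly R}) (M : 'M[R]_n)
  : 'M[R]_n := \sum_(i < size p) p`_i *: M ^+ i.

From HB Require Import structures.
From mathcomp Require Import all_boot all_order all_algebra.
From mathcomp Require Import reals.
From mathcomp Require Import sesquilinear spectral ring.
From mathcomp.real_closed Require Import complex.
Set Implicit Arguments. Unset Strict Implicit. Unset Printing Implicit Defensive.
Import Order.TTheory GRing.Theory Num.Theory.
Local Open Scope ring_scope.

(* Fix a <= min_u p(A)_uu and write M = p(A) - a I = sum_i (p(l_i) - a) s_i s_i^*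
   for an orthonormal eigenbasis (s_i) of A.  Given a quantum k-distance
   c-coloring (P_uh) in dimension d and x in C^n (x) C^d, put z_h = (P_uh x_u)_u.
   An entry M_uv with u <> v is nonzero only if dist(u, v) <= k, and then
   P_uh P_vh = 0; hence sum_h <(M (x) I) z_h, z_h> = sum_u M_uu |x_u|^2 >= 0.
   If c * #{i | p(l_i) >= a} < n, counting dimensions gives x <> 0 with every
   z_h orthogonal to s_i (x) C^d whenever p(l_i) >= a.  Then each
   <(M (x) I) z_h, z_h> = sum_i (p(l_i) - a) |(s_i^* (x) I) z_h|^2 is <= 0, so
   all of them vanish, which forces z_h = 0 for all h and x = sum_h z_h = 0.
   Hence n <= c * #{i | p(l_i) >= a}; the bound involving W is the same
   statement for -p and -W. *)

Lemma sumr_neq0_witness (V : nmodType) (I : finType) (F : I -> V) :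
  \sum_i F i != 0 -> exists i, F i != 0.
Proof.
move=> sum_neq0; apply/existsP; apply: contraNT sum_neq0 => /existsPn F0.
by rewrite big1 // => i _; apply/eqP/negPn/F0.
Qed.

Lemma underdetermined_system_nontrivial (F : fieldType) (I J : finType)
    (Js : {set J}) (a : J -> I -> F) :
  (#|Js| < #|I|)%N ->
  exists2 x : I -> F, (exists i, x i != 0) &
    forall j, j \in Js -> \sum_i a j i * x i = 0.
Proof.
move=> card_lt.
pose K : 'M[F]_(#|I|, #|Js|) := \matrix_(i, j) a (enum_val j) (enum_val i).
have /rowV0Pn [v /sub_kermxP vK v_neq0] : kermx K != 0.
  rewrite -mxrank_eq0 mxrank_ker subn_eq0 -ltnNge.
  exact: leq_ltn_trans (rank_leq_col K) card_lt.
exists (fun i => v 0 (enum_rank i)).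
  have [b vb] : exists b, v 0 b != 0.
    apply/existsP; apply: contraNT v_neq0 => /existsPn v0.
    by apply/eqP/rowP => b; rewrite mxE; apply/eqP/negPn/v0.
  by exists (enum_val b); rewrite enum_valK.
move=> j Jj; move/rowP: vK => /(_ (enum_rank_in Jj j)); rewrite !mxE => vK.
rewrite -[RHS]vK (reindex enum_rank) /=; last first.
  by exists enum_val => i _; [rewrite enum_rankK | rewrite enum_valK].
by apply: eq_bigr => i _; rewrite mxE enum_rankK enum_rankK_in // mulrC.
Qed.

Lemma adjmx_expr_neq0_path (R : numDomainType) n (e : rel 'I_n) m u v :
  (adjmx R e ^+ m) u v != 0 ->
  exists s, [/\ path e u s, last u s = v & size s = m].
Proof.
elim: m u => [|m IHm] u.
  rewrite expr0 mxE; have [->|] := eqVneq u v; last by rewrite mulr0n eqxx.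
  by exists [::].
rewrite exprS mxE => /sumr_neq0_witness [w]; rewrite mxE.
case euw: (e u w); last by rewrite mul0r eqxx.
rewrite mul1r => /IHm [s [es last_s size_s]].
by exists (w :: s); rewrite /= euw es last_s size_s.
Qed.

Lemma poly_mx_adjmx_neq0_dist_le (R : numDomainType) n (e : rel 'I_n) k
    (p : {poly R}) u v :
  (size p <= k.+1)%N -> poly_mx p (adjmx R e) u v != 0 -> dist_le e k u v.
Proof.
move=> size_p; rewrite /poly_mx summxE => /sumr_neq0_witness [m].
rewrite mxE mulf_eq0 negb_or => /andP [_ /adjmx_expr_neq0_path [s [es last_s size_s]]].
by exists s; split => //; rewrite size_s -ltnS (leq_trans (ltn_ord m) size_p).
Qed.

Lemma poly_mxN (R : comNzRingType) n (p : {poly R}) (M : 'M[R]_n) :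
  poly_mx (- p) M = - poly_mx p M.
Proof.
rewrite /poly_mx size_polyN -sumrN; apply: eq_bigr => i _.
by rewrite coefN scaleNr.
Qed.

Lemma map_mxX (R S : nzRingType) (f : {rmorphism R -> S}) n (A : 'M[R]_n) m :
  map_mx f (A ^+ m) = map_mx f A ^+ m.
Proof.
elim: m => [|m IHm]; first by rewrite !expr0 map_mx1.
by rewrite !exprS -!mulmxE map_mxM IHm.
Qed.

Lemma char_poly_similar (F : fieldType) n (S D : 'M[F]_n) :
  S \in unitmx -> char_poly (invmx S *m D *m S) = char_poly D.
Proof.
move=> S_unit; rewrite /char_poly /char_poly_mx.
set Sp := map_mx polyC S; set Sp' := map_mx polyC (invmx S).
have Sp'Sp : Sp' *m Sp = 1%:M by rewrite -map_mxM mulVmx // map_mx1.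
have -> : 'X%:M - map_mx polyC (invmx S *m D *m S) =
          Sp' *m ('X%:M - map_mx polyC D) *m Sp.
  rewrite !map_mxM mulmxBr mulmxBl -/Sp -/Sp'; congr (_ - _).
  by rewrite scalar_mxC -mulmxA Sp'Sp mulmx1.
by rewrite !det_mulmx mulrC mulrA [\det Sp * _]mulrC -det_mulmx Sp'Sp det1 mul1r.
Qed.

Local Open Scope sesquilinear_scope.

Lemma poly_mx_spectral (R : rcfType) n (A : 'M[R]_n) (S : 'M[R[i]]_n) (sp : 'I_n -> R) :
  (forall m u v, ((A ^+ m) u v)%:C%C = \sum_i (S i u)^* * (sp i)%:C%C ^+ m * S i v) ->
  forall (p : {poly R}) u v,
    (poly_mx p A u v)%:C%C = \sum_i (S i u)^* * (p.[sp i])%:C%C * S i v.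
Proof.
move=> A_expr p u v; rewrite /poly_mx summxE rmorph_sum.
under [RHS]eq_bigr => i _ do rewrite horner_coef rmorph_sum mulr_sumr mulr_suml.
rewrite [RHS]exchange_big /=; apply: eq_bigr => m _.
rewrite mxE rmorphM /= A_expr mulr_sumr; apply: eq_bigr => i _.
by rewrite rmorphM rmorphXn /=; ring.
Qed.

Lemma unitary_conj_diag_expr (C : numClosedFieldType) n (S : 'M[C]_n)
    (s : 'rV[C]_n) m :
  S \is unitarymx ->
  (S^t* *m diag_mx s *m S) ^+ m = S^t* *m diag_mx (map_mx (fun x => x ^+ m) s) *m S.
Proof.
move=> S_unitary; have SSt := unitarymxP S_unitary.
have StS : S^t* *m S = 1%:M by rewrite -invmx_unitary // mulVmx ?unitarymx_unit.
elim: m => [|m IHm].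
  have -> : map_mx (fun x => x ^+ 0) s = const_mx 1 by apply/matrixP => ? ?; rewrite !mxE.
  by rewrite expr0 diag_const_mx mulmx1 StS.
rewrite exprS IHm -mulmxE !mulmxA -[_ *m S *m S^t*]mulmxA SSt mulmx1.
rewrite -[_ *m diag_mx s *m _]mulmxA; congr (_ *m _ *m _).
apply/matrixP => u v; rewrite mul_diag_mx !mxE.
by case: eqP => [->|]; rewrite ?mulr1n ?mulr0n ?mulr0 // exprS.
Qed.

Lemma real_symmetric_spectral (R : rcfType) n (A : 'M[R]_n) (lam : seq R) :
  A^T = A -> char_poly A = \prod_(l <- lam) ('X - l%:P) ->
  exists (S : 'M[R[i]]_n) (sp : 'I_n -> R),
   [/\ forall u v, ((u == v)%:R : R[i]) = \sum_i (S i u)^* * S i v,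
       forall (p : {poly R}) u v,
         (poly_mx p A u v)%:C%C = \sum_i (S i u)^* * (p.[sp i])%:C%C * S i v &
       perm_eq [seq sp i | i <- enum 'I_n] lam].
Proof.
move=> A_sym char_A; set AC := map_mx (real_complex R) A.
have AC_normal : AC \is normalmx.
  apply/normalmxP; suff -> : AC^t* = AC by [].
  by apply/matrixP => u v; rewrite !mxE -{2}A_sym mxE; exact: conjc_real.
have AC_eq := orthomx_spectralP AC_normal.
set S := spectralmx AC in AC_eq; set s := spectral_diag AC in AC_eq.
have S_unitary : S \is unitarymx := spectral_unitarymx AC.
have StS : S^t* *m S = 1%:M by rewrite -invmx_unitary // mulVmx ?unitarymx_unit.
rewrite invmx_unitary // in AC_eq.
have s_perm : perm_eq [seq s 0 i | i <- enum 'I_n] (map (real_complex R) lam).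
  apply: prod_XsubC_eq; rewrite big_map.
  have -> : \prod_(x <- map (real_complex R) lam) ('X - x%:P) = char_poly AC.
    rewrite -map_char_poly char_A rmorph_prod big_map; apply: eq_bigr => l _.
    by rewrite rmorphB /= map_polyX map_polyC.
  rewrite AC_eq -invmx_unitary // char_poly_similar ?unitarymx_unit //.
  rewrite char_poly_trig ?diag_mx_is_trig // big_enum /=.
  by apply: eq_bigr => i _; rewrite mxE eqxx mulr1n.
have s_real i : (complex.Re (s 0 i))%:C%C = s 0 i.
  have : s 0 i \in map (real_complex R) lam.
    by rewrite -(perm_mem s_perm); apply: map_f; rewrite mem_enum.
  by case/mapP => r _ ->.
exists S, (fun i => complex.Re (s 0 i)); split.
- move=> u v; move/matrixP: StS => /(_ u v); rewrite !mxE => <-.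
  by apply: eq_bigr => i _; rewrite !mxE.
- apply: poly_mx_spectral => m u v; have -> : ((A ^+ m) u v)%:C%C = (AC ^+ m) u v.
    by rewrite -map_mxX mxE.
  rewrite AC_eq unitary_conj_diag_expr // mul_mx_diag !mxE; apply: eq_bigr => i _.
  by rewrite !mxE s_real.
apply: (@perm_map_inj _ _ (real_complex R)); first exact: complexI.
by rewrite -map_comp (eq_map s_real).
Qed.

Lemma psumr_le0_eq0 (R : numDomainType) (I : finType) (F : I -> R) :
  (forall i, 0 <= F i) -> \sum_i F i <= 0 -> forall i, F i = 0.
Proof.
move=> F_ge0 sum_le0 i.
have sum_eq0 : \sum_i F i = 0 by apply/eqP; rewrite eq_le sum_le0 sumr_ge0.
by apply: (psumr_eq0P _ sum_eq0) => // j _; apply: F_ge0.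
Qed.

Section QuantumInertiaBound.
Variables (C : numClosedFieldType) (n c d : nat).
Variables (S : 'M[C]_n) (L : 'I_n -> C) (M : 'I_n -> 'I_n -> C).
Variable P : 'I_n -> 'I_c -> 'M[C]_d.
Hypothesis S_unitary : forall u v, ((u == v)%:R : C) = \sum_i (S i u)^* * S i v.
Hypothesis M_spectral : forall u v, M u v = \sum_i (S i u)^* * L i * S i v.
Hypothesis L_real : forall i, L i \is Num.real.
Hypothesis P_hermitian : forall u h a b, (P u h a b)^* = P u h b a.
Hypothesis P_idem : forall u h, P u h *m P u h = P u h.
Hypothesis P_sum1 : forall u, \sum_h P u h = 1%:M.
Hypothesis P_orth : forall u v h, u != v -> M u v != 0 -> P u h *m P v h = 0.
Hypothesis M_diag_ge0 : forall u, 0 <= M u u.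
Hypothesis d_gt0 : (0 < d)%N.

Lemma quad_form_spectral (z : 'I_n -> 'I_d -> C) :
  \sum_u \sum_v M u v * \sum_j z u j * (z v j)^* =
  \sum_i L i * \sum_j (\sum_u (S i u)^* * z u j) * (\sum_u (S i u)^* * z u j)^*.
Proof.
under eq_bigr => u _ do under eq_bigr => v _ do rewrite M_spectral mulr_suml.
under eq_bigr => u _ do rewrite exchange_big /=.
rewrite exchange_big /=; apply: eq_bigr => i _; rewrite mulr_sumr.
under eq_bigr => u _ do under eq_bigr => v _ do rewrite mulr_sumr.
under eq_bigr => u _ do rewrite exchange_big /=.
rewrite exchange_big /=; apply: eq_bigr => j _.
rewrite rmorph_sum mulr_suml mulr_sumr; apply: eq_bigr => u _.
rewrite !mulr_sumr; apply: eq_bigr => v _.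
by rewrite rmorphM /= conjCK; ring.
Qed.

Lemma unitary_expand (z : 'I_n -> 'I_d -> C) v j :
  z v j = \sum_i S i v * \sum_u (S i u)^* * z u j.
Proof.
transitivity (\sum_u (u == v)%:R * z u j).
  rewrite (bigD1 v) //= eqxx mul1r big1 ?addr0 // => u u_neq_v.
  by rewrite (negbTE u_neq_v) mul0r.
under [RHS]eq_bigr => i _ do rewrite mulr_sumr.
rewrite [RHS]exchange_big /=; apply: eq_bigr => u _.
by rewrite S_unitary mulr_suml; apply: eq_bigr => i _; ring.
Qed.

Section Witness.
Variable x : 'I_n -> 'I_d -> C.

Local Notation Z h u j := (\sum_l x u l * P u h l j).
Local Notation Y h i j := (\sum_u (S i u)^* * Z h u j).

Lemma sum_Z_conj u v : \sum_h \sum_j Z h u j * (Z h v j)^* =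
  \sum_l \sum_m x u l * (x v m)^* * (\sum_h P u h *m P v h) l m.
Proof.
under [RHS]eq_bigr => l _ do under eq_bigr => m _ do rewrite summxE mulr_sumr.
under [RHS]eq_bigr => l _ do rewrite exchange_big /=.
rewrite [RHS]exchange_big /=; apply: eq_bigr => h _.
under [RHS]eq_bigr => l _ do under eq_bigr => m _ do rewrite mxE mulr_sumr.
under [RHS]eq_bigr => l _ do rewrite exchange_big /=.
rewrite [RHS]exchange_big /=; apply: eq_bigr => j _.
rewrite rmorph_sum mulr_suml; apply: eq_bigr => l _.
rewrite mulr_sumr; apply: eq_bigr => m _.
by rewrite rmorphM /= P_hermitian; ring.
Qed.

Lemma sum_quad_form :
  \sum_h \sum_u \sum_v M u v * \sum_j Z h u j * (Z h v j)^* =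
  \sum_u M u u * \sum_l x u l * (x u l)^*.
Proof.
rewrite exchange_big /=; apply: eq_bigr => u _; rewrite exchange_big /=.
under eq_bigr => v _ do rewrite -mulr_sumr.
rewrite (bigD1 u) //= [X in _ + X]big1 ?addr0 => [|v v_neq_u].
  have PP1 : \sum_h P u h *m P u h = 1%:M.
    by under eq_bigr => h _ do rewrite P_idem; apply: P_sum1.
  congr (_ * _); rewrite sum_Z_conj PP1.
  apply: eq_bigr => l _; rewrite (bigD1 l) //= mxE eqxx mulr1 big1 ?addr0 // => m m_neq_l.
  by rewrite mxE eq_sym (negbTE m_neq_l) mulr0.
have [->|Muv_neq0] := eqVneq (M u v) 0; first by rewrite mul0r.
have PP0 : \sum_h P u h *m P v h = 0.
  by apply: big1 => h _; apply: P_orth; rewrite // eq_sym.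
rewrite sum_Z_conj PP0 big1 ?mulr0 // => l _.
by rewrite big1 // => m _; rewrite mxE mulr0.
Qed.

Lemma x_sum_Z u l : x u l = \sum_h Z h u l.
Proof.
transitivity (\sum_m x u m * (\sum_h P u h) m l).
  rewrite P_sum1 (bigD1 l) //= mxE eqxx mulr1 big1 ?addr0 // => m m_neq_l.
  by rewrite mxE (negbTE m_neq_l) mulr0.
rewrite exchange_big /=; apply: eq_bigr => m _.
by rewrite summxE mulr_sumr.
Qed.

Lemma witness_eq0 : (forall h i j, 0 <= L i -> Y h i j = 0) -> forall u l, x u l = 0.
Proof.
move=> Y_eq0_ge0.
pose Q h := \sum_u \sum_v M u v * \sum_j Z h u j * (Z h v j)^*.
have Q_spectral h : Q h = \sum_i L i * \sum_j Y h i j * (Y h i j)^*.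
  exact: quad_form_spectral.
have L_term_le0 h i : L i * \sum_j Y h i j * (Y h i j)^* <= 0.
  have [Li_ge0|Li_lt0] := real_ge0P (L_real i).
    by rewrite big1 ?mulr0 // => j _; rewrite Y_eq0_ge0 ?mul0r.
  by apply: mulr_le0_ge0; [apply: ltW | apply: sumr_ge0 => j _; apply: mul_conjC_ge0].
have Q_eq0 h : Q h = 0.
  apply/eqP; rewrite -oppr_eq0; apply/eqP; move: h; apply: psumr_le0_eq0.
    by move=> h; rewrite oppr_ge0 Q_spectral sumr_le0.
  rewrite sumrN oppr_le0 sum_quad_form sumr_ge0 // => u _.
  by rewrite mulr_ge0 ?sumr_ge0 // => l _; apply: mul_conjC_ge0.
have Y_eq0 h i j : Y h i j = 0.
  have [Li_ge0|Li_lt0] := real_ge0P (L_real i); first exact: Y_eq0_ge0.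
  have /eqP : - (L i * \sum_j Y h i j * (Y h i j)^*) = 0.
    move: i {Li_lt0}; apply: psumr_le0_eq0 => [i|]; first by rewrite oppr_ge0.
    by rewrite sumrN -Q_spectral Q_eq0 oppr0.
  rewrite oppr_eq0 mulf_eq0 (negbTE (ltr0_neq0 Li_lt0)) /= => /eqP norm_Y0.
  apply/eqP; rewrite -mul_conjC_eq0; apply/eqP; move: j; apply: psumr_le0_eq0.
    by move=> j; apply: mul_conjC_ge0.
  by rewrite norm_Y0.
move=> u l; rewrite x_sum_Z big1 // => h _.
by rewrite (unitary_expand (fun u j => Z h u j)) big1 // => i _; rewrite Y_eq0 mulr0.
Qed.

End Witness.

Lemma quantum_inertia_bound : (n <= c * #|[set i | (0 <= L i)%R]|)%N.
Proof.
set G := [set i | _]; rewrite leqNgt; apply/negP => card_lt.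
pose Js := setX (setX [set: 'I_c] G) [set: 'I_d].
pose a (t : 'I_c * 'I_n * 'I_d) (s : 'I_n * 'I_d) :=
  (S t.1.2 s.1)^* * P s.1 t.1.1 s.2 t.2.
have Js_lt : (#|Js| < #|{: 'I_n * 'I_d}|)%N.
  by rewrite !cardsX !cardsT card_prod !card_ord ltn_pmul2r.
have [x [[u l] x_neq0] x_sol] := underdetermined_system_nontrivial a Js_lt.
suff : x (u, l) = 0 by move/eqP: x_neq0.
apply: (witness_eq0 (x := fun u l => x (u, l))) => h i j Li_ge0.
rewrite -[RHS](x_sol ((h, i), j)); last by rewrite /Js /G !inE /= Li_ge0.
under eq_bigr => v _ do rewrite mulr_sumr.
rewrite pair_big; apply: eq_bigr => -[v m] _ /=.
by rewrite /a /=; ring.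
Qed.

End QuantumInertiaBound.

Lemma quantum_kdist_coloring_count_bound (R : rcfType) n (e : rel 'I_n)
    (lam : seq R) k (p : {poly R}) c (a : R) :
  symmetric e -> char_poly (adjmx R e) = \prod_(l <- lam) ('X - l%:P) ->
  (size p <= k.+1)%N -> has_quantum_kdist_coloring R e k c ->
  (forall u, a <= poly_mx p (adjmx R e) u u) ->
  (n <= c * count (fun l => (a <= p.[l])%R) lam)%N.
Proof.
move=> e_sym char_A size_p [d [d_gt0 [P [P_proj P_sum1 P_orth]]]] diag_ge.
have A_sym : (adjmx R e)^T = adjmx R e by apply/matrixP => u v; rewrite !mxE e_sym.
have [S [sp [S_unitary A_spectral sp_lam]]] := real_symmetric_spectral A_sym char_A.
pose L i := (p.[sp i] - a)%:C%C.
pose M u v := (poly_mx p (adjmx R e) u v - a * (u == v)%:R)%:C%C.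
have M_spectral u v : M u v = \sum_i (S i u)^* * L i * S i v.
  rewrite /M /L rmorphB rmorphM rmorph_nat /= A_spectral S_unitary mulr_sumr -sumrB.
  by apply: eq_bigr => i _; rewrite rmorphB /=; ring.
have L_ge0 i : (0 <= L i) = (a <= p.[sp i]).
  by rewrite -(rmorph0 (real_complex R)) lecR subr_ge0.
have L_real i : L i \is Num.real.
  by rewrite realE -(rmorph0 (real_complex R)) !lecR le_total.
have -> : count (fun l => a <= p.[l]) lam = #|[set i | (0 <= L i)%R]|.
  rewrite (eq_card (B := [pred i | a <= p.[sp i]])) => [|i]; last by rewrite !inE L_ge0.
  by rewrite -(permP sp_lam) count_map cardE /enum_mem size_filter filter_predT.
apply: (@quantum_inertia_bound _ n c d S L M P) => //.
- by move=> u h i j; have [_ /matrixP /(_ j i)] := P_proj u h; rewrite !mxE.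
- by move=> u h; have [] := P_proj u h.
- move=> u v h u_neq_v Muv_neq0; apply: P_orth => //.
  apply: (poly_mx_adjmx_neq0_dist_le size_p); apply: contraNneq Muv_neq0 => pA0.
  by rewrite /M pA0 (negbTE u_neq_v) mulr0 subr0 rmorph0.
- by move=> u; rewrite /M eqxx mulr1 -(rmorph0 (real_complex R)) lecR subr_ge0.
Qed.

Theorem theorem4p1 (R : realType) (n : nat) (hn : (0 < n)%N) (e : rel 'I_n)
    (hG : simple_graph e) (lam : seq R)
    (hlam : char_poly (adjmx R e) = \prod_(l <- lam) ('X - l%:P))
    (k : nat) (hk : (1 <= k)%N) (p : {poly R}) (hp : (size p <= k.+1)%N)
    (c : nat) (hc : has_quantum_kdist_coloring R e k c) :
  let pA := poly_mx p (adjmx R e) in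
  let W := maxdiag pA (Ordinal hn) in
  let w := mindiag pA (Ordinal hn) in
  (n%:R / (minn (count (fun l => w <= p.[l]) lam)
                (count (fun l => p.[l] <= W) lam))%:R <= (c%:R : R)).
Proof.
cbv zeta; set pA := poly_mx p _; set W := maxdiag pA _; set w := mindiag pA _.
have e_sym := proj1 hG.
have count_w : (n <= c * count (fun l => (w <= p.[l])%R) lam)%N.
  apply: quantum_kdist_coloring_count_bound e_sym hlam hp hc _ => u.
  exact: bigmin_le.
have count_W : (n <= c * count (fun l => (p.[l] <= W)%R) lam)%N.
  have size_Np : (size (- p) <= k.+1)%N by rewrite size_polyN.
  rewrite (eq_count (a2 := fun l => - W <= (- p).[l])); last first.
    by move=> l; rewrite hornerN lerN2.
  apply: quantum_kdist_coloring_count_bound e_sym hlam size_Np hc _ => u.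
  by rewrite poly_mxN mxE lerN2; apply: (le_bigmax _ (fun v => pA v v) u).
set m := minn _ _; have n_le : (n <= c * m)%N by rewrite /m /minn; case: ifP.
have [->|m_neq0] := eqVneq m 0%N; first by rewrite invr0 mulr0 ler0n.
by rewrite ler_pdivrMr ?ltr0n ?lt0n // -natrM ler_nat.
Qed.
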